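(* Let $n\in\mathbb N$ and $0<\gamma\le1/20$. Let $G$ be a graph of order $n$ with $(1/2-\gamma)n\le\delta(G)\le\Delta(G)\le3n/5$. Suppose that $|N(x)\triangle N(y)|\le\gamma n$ for every edge $xy\in E(G)$. Then there exists a bipartition $X,Y$ of $V(G)$ such that $\delta(G[X]),\delta(G[Y])\ge(1/2-5\gamma)n$ and $(1/2-5\gamma)n\le|X|,|Y|\le(1/2+5\gamma)n$.
   Context: $\delta(G)$ and $\Delta(G)$ are the minimum and maximum degree of $G$, $N(x)$ is the neighbourhood of $x$, and $\triangle$ denotes symmetric difference. *)

From HB Require Import structures.
From mathcomp Require Import all_boot all_order all_algebra.
Set Implicit Arguments. Unset Strict Implicit. Unset Printing Implicit Defensive.
Import Order.TTheory GRing.Theory Num.Theory.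

Definition simple_graph (T : finType) (e : rel T) : Prop :=
  symmetric e /\ irreflexive e.

Definition nbhd (T : finType) (e : rel T) (x : T) : {set T} := [set y | e x y].

Definition deg (T : finType) (e : rel T) (x : T) : nat := #|nbhd e x|.

Definition deg_in (T : finType) (e : rel T) (X : {set T}) (x : T) : nat :=
  #|nbhd e x :&: X|.

Definition symdiff (T : finType) (A B : {set T}) : {set T} := (A :\: B) :|: (B :\: A).

From HB Require Import structures.
From mathcomp Require Import all_boot all_order all_algebra.
From mathcomp Require Import lra.
(* Fix a vertex x and let X be the set of vertices sharing a neighbour with x.
   For z in X, the triangle inequality for symmetric differences through a
   common neighbour gives |N(z) Δ N(x)| <= 2γn.  One more edge step shows that X
   is closed under adjacency: a neighbour w of z outside X has N(w), N(x)
   disjoint, so d(w) + d(x) <= 3γn, against the minimum degree.  Hence X and its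
   complement are unions of components and induced degrees are full degrees.
   The complement is nonempty: otherwise every vertex has at least d(x) - 2γn
   common neighbours with x, and double counting gives
   n (d(x) - 2γn) <= Σ_{y ∈ N(x)} d(y) <= 3n d(x)/5, i.e. d(x) <= 5γn.
   Finally |X| >= d(x) and |V \ X| >= d(y) for any y outside X. *)

Set Implicit Arguments.
Unset Strict Implicit.
Unset Printing Implicit Defensive.

Import Order.TTheory GRing.Theory Num.Theory.

Section SymmetricDifference.
Variable T : finType.
Implicit Types A B C : {set T}.

Lemma symdiffC A B : symdiff A B = symdiff B A.
Proof. by rewrite /symdiff setUC. Qed.

Lemma card_symdiff_triangle A B C :
  #|symdiff A C| <= #|symdiff A B| + #|symdiff B C|.
Proof.
apply: leq_trans (leq_card_setU _ _); apply: subset_leq_card.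
by apply/subsetP => z; rewrite !inE; case: (z \in A); case: (z \in B); case: (z \in C).
Qed.

Lemma leq_card_setI_symdiff A B : #|A| <= #|A :&: B| + #|symdiff A B|.
Proof.
apply: leq_trans (leq_card_setU _ _); apply: subset_leq_card.
by apply/subsetP => z; rewrite !inE; case: (z \in A); case: (z \in B).
Qed.

Lemma card_symdiff_disjoint A B : A :&: B = set0 -> #|symdiff A B| = #|A| + #|B|.
Proof.
move=> AB0; have -> : symdiff A B = A :|: B.
  apply/setP => z; move/setP/(_ z): AB0.
  by rewrite !inE; case: (z \in A); case: (z \in B).
by rewrite -cardsUI AB0 cards0 addn0.
Qed.

End SymmetricDifference.

Section Graph.
Variables (T : finType) (e : rel T).
Hypothesis esym : symmetric e.

Lemma sum_codegree x :
  \sum_z #|nbhd e x :&: nbhd e z| = \sum_(y in nbhd e x) deg e y.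
Proof.
transitivity (\sum_z \sum_(y in nbhd e x) (e z y : nat)).
  apply: eq_bigr => z _; rewrite -sum1_card big_mkcond [RHS]big_mkcond /=.
  by apply: eq_bigr => y _; rewrite !inE; case: (e x y); case: (e z y).
rewrite exchange_big /=; apply: eq_bigr => y _.
rewrite /deg /nbhd -sum1_card [RHS]big_mkcond /=; apply: eq_bigr => z _.
by rewrite inE esym; case: (e y z).
Qed.

Lemma closed_setC (X : {set T}) : closed e X -> closed e (~: X).
Proof. by move=> clX z w /clX; rewrite !inE => ->. Qed.

Lemma nbhd_sub_closed (X : {set T}) z : closed e X -> z \in X -> nbhd e z \subset X.
Proof. by move=> clX zX; apply/subsetP => w; rewrite inE => /clX <-. Qed.

Lemma deg_in_closed (X : {set T}) z : closed e X -> z \in X -> deg_in e X z = deg e z.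
Proof. by move=> clX zX; rewrite /deg_in (setIidPl (nbhd_sub_closed clX zX)). Qed.

End Graph.

Definition nbhd2 (T : finType) (e : rel T) (x : T) : {set T} :=
  [set z | nbhd e z :&: nbhd e x != set0].

Lemma mem_nbhd2_self (T : finType) (e : rel T) x : 0 < deg e x -> x \in nbhd2 e x.
Proof. by rewrite inE setIid card_gt0. Qed.

Local Open Scope ring_scope.

Section SecondNeighbourhood.
Variables (R : realFieldType) (T : finType) (e : rel T) (b : R).
Hypothesis esym : symmetric e.
Hypothesis symdiff_edge :
  forall x y, e x y -> #|symdiff (nbhd e x) (nbhd e y)|%:R <= b.

Lemma symdiff_nbhd2 x z :
  z \in nbhd2 e x -> #|symdiff (nbhd e z) (nbhd e x)|%:R <= 2 * b.
Proof.
rewrite inE => /set0Pn [u]; rewrite !inE => /andP [ezu exu].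
have := card_symdiff_triangle (nbhd e z) (nbhd e u) (nbhd e x).
rewrite -(ler_nat R) natrD => tri.
have := symdiff_edge ezu; have := symdiff_edge (_ : e u x); rewrite esym => /(_ exu).
lra.
Qed.

Lemma closed_nbhd2 (d : R) x :
  (forall z, d <= (deg e z)%:R) -> 3 * b < 2 * d -> closed e (nbhd2 e x).
Proof.
move=> deg_ge bd.
suff nbhd2_step z w : e z w -> z \in nbhd2 e x -> w \in nbhd2 e x.
  by move=> z w ezw; apply/idP/idP; apply: nbhd2_step; rewrite // esym.
move=> ezw zX; rewrite inE; apply/negP => /eqP disj.
have := card_symdiff_disjoint disj.
have := card_symdiff_triangle (nbhd e w) (nbhd e z) (nbhd e x).
rewrite -(ler_nat R) natrD => tri /(congr1 (fun k => k%:R : R)); rewrite natrD => sdwx.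
have := symdiff_nbhd2 zX; have := symdiff_edge (_ : e w z); rewrite esym => /(_ ezw).
have := deg_ge w; have := deg_ge x; rewrite /deg; lra.
Qed.

Lemma codegree_nbhd2 x z :
  z \in nbhd2 e x -> (deg e x)%:R - 2 * b <= #|nbhd e x :&: nbhd e z|%:R.
Proof.
move=> /symdiff_nbhd2; rewrite symdiffC.
have := leq_card_setI_symdiff (nbhd e x) (nbhd e z).
rewrite -(ler_nat R) natrD /deg; lra.
Qed.

Lemma exists_notin_nbhd2 (D : R) x :
  (forall y, (deg e y)%:R <= D) ->
  D * (deg e x)%:R < #|T|%:R * ((deg e x)%:R - 2 * b) ->
  exists y, y \notin nbhd2 e x.
Proof.
move=> deg_le lt_sum; case: (pickP [predC nbhd2 e x]) => [y yX | all_in]; first by exists y.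
suff : #|T|%:R * ((deg e x)%:R - 2 * b) <= D * (deg e x)%:R by rewrite leNgt lt_sum.
have zX z : z \in nbhd2 e x by move: (all_in z) => /= /negbFE.
have sum_ge : \sum_(z : T) ((deg e x)%:R - 2 * b) <= \sum_z #|nbhd e x :&: nbhd e z|%:R.
  by apply: ler_sum => z _; apply/codegree_nbhd2/zX.
have sum_le : \sum_(y in nbhd e x) (deg e y)%:R <= \sum_(y in nbhd e x) D.
  by apply: ler_sum => y _; apply: deg_le.
rewrite sumr_const -natr_sum (sum_codegree esym) natr_sum in sum_ge.
rewrite sumr_const in sum_le.
move: (le_trans sum_ge sum_le).
by rewrite -[_ *+ #|_|]mulr_natr -[D *+ _]mulr_natr -/(deg e x); lra.
Qed.

End SecondNeighbourhood.

Theorem proposition5p5 (R : realFieldType) (T : finType) (e : rel T) (gamma : R) :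
  simple_graph e ->
  0 < gamma -> gamma <= 1 / 20 ->
  (forall x : T, (1 / 2 - gamma) * #|T|%:R <= (deg e x)%:R) ->
  (forall x : T, (deg e x)%:R <= 3 / 5 * (#|T|%:R : R)) ->
  (forall x y : T, e x y -> (#|symdiff (nbhd e x) (nbhd e y)|)%:R <= gamma * #|T|%:R) ->
  exists X Y : {set T},
    [/\ X :&: Y = set0 /\ X :|: Y = setT,
        (forall x, x \in X -> (1 / 2 - 5 * gamma) * #|T|%:R <= (deg_in e X x)%:R),
        (forall y, y \in Y -> (1 / 2 - 5 * gamma) * #|T|%:R <= (deg_in e Y y)%:R),
        (1 / 2 - 5 * gamma) * #|T|%:R <= #|X|%:R /\ #|X|%:R <= (1 / 2 + 5 * gamma) * #|T|%:R
      & (1 / 2 - 5 * gamma) * #|T|%:R <= #|Y|%:R /\ #|Y|%:R <= (1 / 2 + 5 * gamma) * #|T|%:R].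
Proof.
move=> [esym _] gamma_gt0 gamma_le deg_ge deg_le symdiff_edge.
have [x _ | T0] := pickP (@predT T); last first.
  have cardT0 : #|T| = 0%N by apply: eq_card0.
  exists set0, set0; rewrite cardT0 !mulr0 cards0 setI0 setU0.
  by split => //; split => //; apply/setP => z; have := T0 z.
set n : R := #|T|%:R.
have n_gt0 : 0 < n by rewrite ltr0n; apply/card_gt0P; exists x.
have gamma_n_ge0 : 0 <= gamma * n by rewrite mulr_ge0 // ltW.
have gamma_n_le : gamma * n <= 1 / 20 * n by rewrite ler_wpM2r // ltW.
set X := nbhd2 e x.
have clX : closed e X.
  by apply: closed_nbhd2 esym symdiff_edge _ _ deg_ge _; lra.
have xX : x \in X.
  by apply: mem_nbhd2_self; rewrite -(ltr0n R); have := deg_ge x; lra.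
have [y yX] : exists y, y \notin X.
  apply: exists_notin_nbhd2 esym symdiff_edge _ _ deg_le _.
  have : 0 < n * (2 / 5 * (deg e x)%:R - 2 * (gamma * n)).
    by rewrite mulr_gt0 //; have := deg_ge x; lra.
  lra.
have clY := closed_setC clX.
have yY : y \in ~: X by rewrite inE.
have sizeX := subset_leq_card (nbhd_sub_closed clX xX).
have sizeY := subset_leq_card (nbhd_sub_closed clY yY).
have /(congr1 (fun k => k%:R : R)) := cardsC X; rewrite natrD -/n => sizeXY.
move: sizeX sizeY; rewrite -!(ler_nat R) -!/(deg e _) => sizeX sizeY.
have [deg_x deg_y] := (deg_ge x, deg_ge y).
exists X, (~: X); split; first by rewrite setICr setUCr.
- by move=> z zX; rewrite deg_in_closed //; have := deg_ge z; lra.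
- by move=> z zY; rewrite deg_in_closed //; have := deg_ge z; lra.
- by split; lra.
- by split; lra.
Qed.
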